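(* Let $(X_1,\ldots,X_d)$ be a continuous random vector and assume (H1) and (H2) for $(X_1,\ldots,X_d)$ and for all perturbed vectors below. Suppose that for every $k\in\{1,\ldots,d\}$ there is $\epsilon_0>0$ such that for all $|\epsilon|<\epsilon_0$, $\mathbb{E}\big[\sup_{v\in[0,u]}|g_k'(v-(1+\epsilon)X_k)|\big]<\infty$. Then for every $i\in\{1,\ldots,d\}$, $\lim_{\epsilon\to0}A_{X_1,\ldots,X_{i-1},(1+\epsilon)X_i,X_{i+1},\ldots,X_d}(u)=A_{X_1,\ldots,X_d}(u)$.
   Context: For a vector $\mathbf Y=(Y_1,\ldots,Y_d)$ of nonnegative random variables and capital $u\ge0$, $\mathcal{U}^d_u=\{v\in[0,u]^d:\sum_kv_k=u\}$ and $I_{\mathbf Y}(v)=\sum_{k=1}^d\mathbb{E}[g_k(v_k-Y_k)\mathbf 1_{\{Y_k>v_k\}}\mathbf 1_{\{\sum_lY_l\le u\}}]$, with penalty functions $g_k:(-\infty,0]\to[0,\infty)$ that are $C^1$, convex, $g_k(0)=0$ (with $g_k'(x)$ understood as $0$ where the indicator vanishes). (H1): $I_{\mathbf Y}$ has a unique minimizer on $\mathcal{U}^d_u$, denoted $A_{Y_1,\ldots,Y_d}(u)$ (the optimal allocation). (H2): the $g_k$ are differentiable, the relevant $g_k'(v_k-Y_k)$ are integrable, and each $(Y_k,\sum_lY_l)$ has a joint density. *)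

From HB Require Import structures.
From mathcomp Require Import all_boot all_order all_algebra.
From mathcomp Require Import all_classical all_reals all_analysis.
Set Implicit Arguments. Unset Strict Implicit. Unset Printing Implicit Defensive.
Import Order.TTheory GRing.Theory Num.Theory.
Import numFieldNormedType.Exports.
Local Open Scope classical_set_scope.
Local Open Scope ring_scope.

Section Allocation.
Context {R : realType} {dT : measure_display} {T : measurableType dT}
  (P : probability T R) (d : nat).

Definition total (Y : 'I_d -> T -> R) (w : T) : R := \sum_(k < d) Y k w.

Definition allocs (u : R) : set ('I_d -> R) :=
  [set v | (forall k, 0 <= v k <= u) /\ \sum_(k < d) v k = u].

Definition Icrit (g : 'I_d -> R -> R) (u : R) (Y : 'I_d -> T -> R)
    (v : 'I_d -> R) : \bar R :=
  (\sum_(k < d) \int[P]_w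
     (g k (v k - Y k w) * (if v k < Y k w then 1 else 0)
        * (if total Y w <= u then 1 else 0))%:E)%E.

Definition is_minimizer (g : 'I_d -> R -> R) (u : R) (Y : 'I_d -> T -> R)
    (v : 'I_d -> R) : Prop :=
  allocs u v /\ forall w, allocs u w -> (Icrit g u Y v <= Icrit g u Y w)%E.

Definition H1 (g : 'I_d -> R -> R) (u : R) (Y : 'I_d -> T -> R) : Prop :=
  exists! v, is_minimizer g u Y v.

Definition alloc (g : 'I_d -> R -> R) (u : R) (Y : 'I_d -> T -> R)
    : 'I_d -> R :=
  xget (fun _ => 0) [set v | is_minimizer g u Y v].

Definition has_joint_density (Z1 Z2 : T -> R) : Prop :=
  exists f : R * R -> R, (forall z, 0 <= f z) /\ measurable_fun setT f /\
    forall B : set (R * R), measurable B ->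
      P ((fun w => (Z1 w, Z2 w)) @^-1` B) =
      (\int[(@lebesgue_measure R) \x (@lebesgue_measure R)]_(z in B) (f z)%:E)%E.

(* (H2): g_k differentiable with derivative dg_k (given as hypotheses on
   g, dg elsewhere), the relevant g_k'(v_k - Y_k) integrable (with g_k'
   read as 0 where the indicator vanishes), and each (Y_k, sum_l Y_l)
   has a joint density. *)
Definition H2 (dg : 'I_d -> R -> R) (u : R) (Y : 'I_d -> T -> R) : Prop :=
  (forall v, allocs u v -> forall k,
     P.-integrable setT (fun w =>
       (dg k (v k - Y k w) * (if v k < Y k w then 1 else 0)
          * (if total Y w <= u then 1 else 0))%:E)) /\
  (forall k, has_joint_density (Y k) (total Y)).

Definition penalty (g dg : R -> R) : Prop :=
  {within `]-oo, 0]%classic, continuous g} /\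
  (forall x : R, x < 0 -> is_derive x (1 : R) g (dg x)) /\
  {within `]-oo, 0]%classic, continuous dg} /\
  (forall x y t : R, x <= 0 -> y <= 0 -> 0 <= t <= 1 ->
     g (t * x + (1 - t) * y) <= t * g x + (1 - t) * g y) /\
  (forall x : R, x <= 0 -> 0 <= g x) /\ g 0 = 0.

Definition scale_at (Y : 'I_d -> T -> R) (i : 'I_d) (c : R) : 'I_d -> T -> R :=
  fun k w => if k == i then c * Y k w else Y k w.

End Allocation.

Section SupDer.
Context {R : realType}.
Definition sup_absder (dg : R -> R) (u y : R) : \bar R :=
  ereal_sup [set (`|dg (v - y)| * (if v < y then 1 else 0))%:E
            | v in `[0, u]%classic].
End SupDer.

From Pilot Require Import Defs.
From HB Require Import structures.
From mathcomp Require Import all_boot all_order all_algebra.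
From mathcomp Require Import all_classical all_reals all_analysis.
From mathcomp Require Import measurable_realfun lra.
Import Order.TTheory GRing.Theory Num.Theory.
Import numFieldNormedType.Exports.
Local Open Scope classical_set_scope.
Local Open Scope ring_scope.

(* Along a sequence [e_n -> 0] the optimal allocations [A(e_n)] stay in the
   compact simplex, so some subsequence converges to a point [v].  The
   perturbed criteria converge to [I_X], both at these moving points and at any
   fixed allocation, by dominated convergence: the penalties are bounded on
   [[-u, 0]], and the indicators of the integrand converge outside the null
   sets [{X_k = v_k}] and [{X_1 + ... + X_d = u}] (the latter is null because
   [(X_i, X_1 + ... + X_d)] has a density).  Hence [v] minimizes [I_X] and is
   [A(0)] by uniqueness; as this holds for every subsequence, [A(e) -> A(0)].
   Only continuity and nonnegativity of the [g_k] enter. *)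

Section real_limits.
Context {R : realType}.

Lemma cvg_indicator_lt {I : Type} {F : set_system I} {FF : Filter F}
    (a b : I -> R) (la lb : R) :
  a @ F --> la -> b @ F --> lb -> la != lb ->
  (fun x => if a x < b x then 1 else 0 : R) @ F -->
    (if la < lb then 1 else 0 : R).
Proof.
move=> ha hb; rewrite neq_lt => /orP[lab|lba]; apply: cvg_near_cst; near=> x.
- rewrite lab ifT // -subr_gt0; near: x.
  by apply: (cvgr_gt _ (cvgB hb ha)); rewrite subr_gt0.
- rewrite (lt_gtF lba) ifF //; apply: lt_gtF; rewrite -subr_gt0; near: x.
  by apply: (cvgr_gt _ (cvgB ha hb)); rewrite subr_gt0.
Unshelve. all: by end_near. Qed.

Lemma cvg_indicator_le {I : Type} {F : set_system I} {FF : Filter F}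
    (a : I -> R) (la c : R) :
  a @ F --> la -> la != c ->
  (fun x => if a x <= c then 1 else 0 : R) @ F --> (if la <= c then 1 else 0 : R).
Proof.
move=> ha; rewrite neq_lt => /orP[lac|cla]; apply: cvg_near_cst; near=> x.
- rewrite (ltW lac) ifT //; apply: ltW; near: x; exact: cvgr_lt ha _ lac.
- rewrite [la <= c]leNgt cla ifF //; apply/negbTE; rewrite -ltNge; near: x.
  exact: cvgr_gt ha _ cla.
Unshelve. all: by end_near. Qed.

Lemma cvg_sumr {I J : Type} {F : set_system I} {FF : Filter F} (r : seq J)
    (f : J -> I -> R) (l : J -> R) :
  (forall j, f j @ F --> l j) ->
  (fun x => \sum_(j <- r) f j x) @ F --> \sum_(j <- r) l j.
Proof.
by move=> hf; apply: (@cvg_big R^o _ _ _ xpredT add_continuous) => // j _.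
Qed.

Lemma increasing_seq_ge (f : nat -> nat) :
  increasing_seq f -> forall n, (n <= f n)%N.
Proof.
move=> /increasing_seqP f_incr; elim=> // n IH.
exact: leq_ltn_trans IH (f_incr n).
Qed.

Lemma cvgn_subseq {U : topologicalType} {w : nat -> U} {l : U} {f : nat -> nat} :
  increasing_seq f -> w @ \oo --> l -> (w \o f) @ \oo --> l.
Proof.
move=> /increasing_seq_ge f_ge w_cvg; apply: cvg_comp w_cvg => A [N _ NA].
by exists N => // n /= Nn; apply: NA; exact: leq_trans Nn (f_ge n).
Qed.

Lemma cvgn_subsubseq (w : nat -> R) (l : R) :
  (forall f, increasing_seq f ->
     exists2 h, increasing_seq h & (w \o f \o h) @ \oo --> l) ->
  w @ \oo --> l.
Proof.
move=> sub; apply/cvgrPdist_lt => e e0; apply: contrapT => w_far.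
have far N : exists n, (N <= n)%N /\ e <= `|l - w n|.
  apply: contrapT => /forallNP farN; apply: w_far; exists N => // n /= Nn.
  by rewrite ltNge; apply/negP => le_e; apply: (farN n).
have [next next_far] := choice far.
pose f := fix f n := if n is m.+1 then next (f m).+1 else next 0%N.
have f_incr : increasing_seq f.
  by apply/increasing_seqP => n; have [] := next_far (f n).+1.
have f_far n : e <= `|l - w (f n)|.
  by case: n => [|n]; [case: (next_far 0%N) | case: (next_far (f n).+1)].
have [h _ /cvgrPdist_lt /(_ _ e0) /filter_ex [n]] := sub f f_incr.
by rewrite /= ltNge f_far.
Qed.

Lemma bolzano_weierstrass_fun {d : nat} {v : nat -> 'I_d -> R} {B : R} :
  (forall n k, `|v n k| <= B) ->
  exists2 phi : nat -> nat, increasing_seq phi &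
    forall k, cvgn (fun n => v (phi n) k).
Proof.
move=> v_bnd.
suff /(_ d (leqnn d)) [phi ? phi_cvg] : forall m, (m <= d)%N ->
    exists2 phi : nat -> nat, increasing_seq phi &
      forall k : 'I_d, (k < m)%N -> cvgn (fun n => v (phi n) k).
  by exists phi => // k; exact: phi_cvg.
elim=> [|m IH] md; first by exists id => // k.
have [phi phi_incr phi_cvg] := IH (ltnW md).
pose km : 'I_d := Ordinal md.
have km_bnd : bounded_fun (fun n => v (phi n) km).
  exists B; split; first exact: num_real.
  by move=> x Bx n _; apply: le_trans (v_bnd _ _) (ltW Bx).
have [psi psi_incr psi_cvg] := bolzano_weierstrass km_bnd.
exists (phi \o psi) => [p q|k]; first exact: etrans (phi_incr _ _) (psi_incr _ _).
rewrite ltnS leq_eqVlt => /orP[/eqP kE|km_lt].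
  by have -> : k = km by exact: val_inj.
have /cvg_ex [l l_cvg] := phi_cvg k km_lt.
by apply/cvg_ex; exists l; exact: (cvgn_subseq psi_incr l_cvg).
Qed.

End real_limits.

Section allocation.
Context {R : realType} {dT : measure_display} {T : measurableType dT}
  {P : probability T R} {d : nat}.

Lemma alloc_is_minimizer {g : 'I_d -> R -> R} {u : R} {Y : 'I_d -> T -> R} :
  H1 P g u Y -> is_minimizer P g u Y (alloc P g u Y).
Proof. by move=> [v [v_min _]]; apply: xgetPex; exists v. Qed.

Lemma minimizer_alloc {g : 'I_d -> R -> R} {u : R} {Y : 'I_d -> T -> R}
    {v : 'I_d -> R} :
  H1 P g u Y -> is_minimizer P g u Y v -> v = alloc P g u Y.
Proof.
move=> H1Y v_min; have [w [_ w_uniq]] := H1Y.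
by rewrite -(w_uniq _ v_min) (w_uniq _ (alloc_is_minimizer H1Y)).
Qed.

Lemma allocs_closed (u : R) (v : nat -> 'I_d -> R) (vs : 'I_d -> R) :
  (forall n, allocs u (v n)) -> (forall k, v n k @[n --> \oo] --> vs k) ->
  allocs u vs.
Proof.
move=> v_alloc v_cvg; split=> [k|].
  have v_bnd n : 0 <= v n k <= u by have [/(_ k)] := v_alloc n.
  rewrite (ler_cvg_to (cvg_cst 0) (v_cvg k))
    ?(ler_cvg_to (v_cvg k) (cvg_cst u)) //.
    by apply: nearW => n; have /andP[] := v_bnd n.
  by apply: nearW => n; have /andP[] := v_bnd n.
have sum_cvg : \sum_(k < d) v n k @[n --> \oo] --> \sum_(k < d) vs k.
  exact: cvg_sumr.
rewrite -(cvg_lim _ sum_cvg) //.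
by under eq_fun do rewrite (v_alloc _).2; exact: lim_cst.
Qed.

Lemma measurable_total {Y : 'I_d -> T -> R} :
  (forall k, measurable_fun setT (Y k)) -> measurable_fun setT (Defs.total Y).
Proof. by move=> mY; apply: measurable_sum. Qed.

Lemma has_joint_density_snd_atomless (Z1 Z2 : T -> R) (c : R) :
  has_joint_density P Z1 Z2 -> P [set w | Z2 w = c] = 0%E.
Proof.
move=> [f [f_ge0 [mf f_density]]].
have line_meas : measurable (setT `*` [set c] : set (R * R)).
  exact: measurableX.
have -> : [set w | Z2 w = c] = (fun w => (Z1 w, Z2 w)) @^-1` (setT `*` [set c]).
  by apply/seteqP; split => w /=; [split|case].
rewrite f_density //; apply: null_set_integral => //.
  by apply/measurable_EFinP; exact: measurable_funS mf.
apply: etrans (@product_measure1E _ _ _ _ _ lebesgue_measure lebesgue_measure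
  setT [set c] measurableT (measurable_set1 c)) _.
by rewrite [X in (_ * X)%E]lebesgue_measure_set1 mule0.
Qed.

End allocation.

Definition loss_term {R : realType} (g : R -> R) (u c z s : R) : R :=
  g (c - z) * (if c < z then 1 else 0) * (if s <= u then 1 else 0).

Section loss_term.
Context {R : realType} {g : R -> R} {u : R}.
Hypothesis g_cont : {within `]-oo, 0], continuous g}.
Hypothesis g_ge0 : forall x, x <= 0 -> 0 <= g x.

(* [g] is only evaluated on [(-oo, 0]], so clipping its argument there makes
   the integrand continuous in [c - z]. *)
Lemma loss_termE (c z s : R) : loss_term g u c z s =
  g (Num.min (c - z) 0) * (if c < z then 1 else 0) * (if s <= u then 1 else 0).
Proof.
rewrite /loss_term; case: ltP => cz; last by rewrite !mulr0 !mul0r.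
by rewrite min_l // subr_le0 ltW.
Qed.

Lemma loss_term_ge0 (c z s : R) : 0 <= loss_term g u c z s.
Proof.
rewrite /loss_term; case: ltP => cz; last by rewrite mulr0 mul0r.
by rewrite mulr1 mulr_ge0 ?g_ge0 ?subr_le0 ?(ltW cz) //; case: ifP.
Qed.

Lemma continuous_comp_min0 : continuous (fun x : R => g (Num.min x 0)).
Proof.
have inA (y : R) : `]-oo, 0]%classic (Num.min y 0).
  by rewrite /= in_itv /= ge_min lexx orbT.
move=> x; have min_cvg : Num.min y 0 @[y --> x] --> Num.min x 0.
  exact: (@min_fun_continuous _ R^o R^o id (cst 0) (fun=> cvg_id)
    (@cst_continuous _ _ 0) x).
apply: cvg_comp ((subspace_continuousP _ g).1 g_cont _ (inA x)).
move=> U /= /min_cvg min_U.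
by apply: (@filterS _ (nbhs x) _ _ _ _ min_U) => y; apply; exact: inA.
Qed.

Lemma measurable_loss_term {d} {T : measurableType d} (c : R) (Z S : T -> R) :
  measurable_fun setT Z -> measurable_fun setT S ->
  measurable_fun setT (fun w => (loss_term g u c (Z w) (S w))%:E).
Proof.
move=> mZ mS; apply/measurable_EFinP; under eq_fun do rewrite loss_termE.
apply: measurable_funM; first apply: measurable_funM.
- apply: measurableT_comp (continuous_measurable_fun continuous_comp_min0) _.
  exact: measurable_funB.
- by apply: measurable_fun_ifT => //; exact: measurable_fun_ltr.
- by apply: measurable_fun_ifT => //; exact: measurable_fun_ler.
Qed.

Lemma loss_term_bounded : 0 <= u -> exists2 M, 0 <= M &
  forall c z s, 0 <= c -> z <= s -> loss_term g u c z s <= M.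
Proof.
move=> u_ge0; have Nu_le0 : - u <= 0 by rewrite oppr_le0.
have [x0 _ x0_max] : exists2 x0, x0 \in `[- u, 0] &
    forall x, x \in `[- u, 0] -> g x <= g x0.
  apply: EVT_max => //; apply: continuous_subspaceW g_cont => x /=.
  by rewrite !in_itv /= => /andP[_ ->].
have gx0_ge0 : 0 <= g x0.
  by apply: le_trans (x0_max 0 _); rewrite ?g_ge0 // in_itv /= Nu_le0 lexx.
exists (g x0) => // c z s c_ge0 zs; rewrite /loss_term.
case: ltP => cz; last by rewrite mulr0 mul0r.
case: ifP => su; last by rewrite mulr0.
by rewrite !mulr1 x0_max // in_itv /= subr_le0 (ltW cz) andbT; lra.
Qed.

Lemma cvg_loss_term {I : Type} {F : set_system I} {FF : Filter F}
    (cn zn sn : I -> R) (c z s : R) :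
  cn @ F --> c -> zn @ F --> z -> sn @ F --> s -> c != z -> s != u ->
  (fun x => loss_term g u (cn x) (zn x) (sn x)) @ F --> loss_term g u c z s.
Proof.
move=> c_cvg z_cvg s_cvg cz su.
rewrite loss_termE; under eq_fun do rewrite loss_termE.
apply: cvgM; [apply: cvgM|].
- exact: cvg_comp (cvgB c_cvg z_cvg) (continuous_comp_min0 _).
- exact: cvg_indicator_lt.
- exact: cvg_indicator_le.
Qed.

End loss_term.

Section criterion_perturbation.
Context {R : realType} {dT : measure_display} {T : measurableType dT}
  {P : probability T R} {d : nat} {u : R} {g : 'I_d -> R -> R}
  {X : 'I_d -> T -> R} {i : 'I_d}.
Hypothesis u_ge0 : 0 <= u.
Hypothesis g_cont : forall k, {within `]-oo, 0], continuous (g k)}.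
Hypothesis g_ge0 : forall k x, x <= 0 -> 0 <= g k x.
Hypothesis mX : forall k, measurable_fun setT (X k).
Hypothesis X_ge0 : forall k w, 0 <= X k w.
Hypothesis X_atomless : forall k x, P [set w | X k w = x] = 0%E.
Hypothesis total_atomless : P [set w | Defs.total X w = u] = 0%E.

Lemma measurable_scale_at (c : R) (k : 'I_d) :
  measurable_fun setT (scale_at X i c k).
Proof.
rewrite /scale_at; case: (k == i); last exact: mX.
exact: measurable_funM (mX k).
Qed.

Lemma scale_at_le_total (c : R) (k : 'I_d) (w : T) : 0 <= c ->
  scale_at X i c k w <= Defs.total (scale_at X i c) w.
Proof.
move=> c_ge0; rewrite /Defs.total (bigD1 k) //= lerDl.
apply: sumr_ge0 => l _; rewrite /scale_at; case: (l == i) => //.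
exact: mulr_ge0 c_ge0 (X_ge0 l w).
Qed.

Lemma scale_at_cvg (c : nat -> R) (k : 'I_d) (w : T) :
  c n @[n --> \oo] --> (1 : R) ->
  scale_at X i (c n) k w @[n --> \oo] --> X k w.
Proof.
move=> c_cvg; rewrite /scale_at; case: (k == i); last exact: cvg_cst.
by rewrite -[X in _ --> X]mul1r; apply: cvgM c_cvg (cvg_cst _).
Qed.

Lemma total_scale_at_cvg (c : nat -> R) (w : T) :
  c n @[n --> \oo] --> (1 : R) ->
  Defs.total (scale_at X i (c n)) w @[n --> \oo] --> Defs.total X w.
Proof. by move=> c_cvg; apply: cvg_sumr => k; exact: scale_at_cvg. Qed.

Lemma integral_loss_term_cvg (k : 'I_d) (c a : nat -> R) (b : R) :
  (forall n, 0 < c n) -> c n @[n --> \oo] --> (1 : R) ->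
  (forall n, 0 <= a n) -> a n @[n --> \oo] --> b ->
  (\int[P]_w (loss_term (g k) u (a n) (scale_at X i (c n) k w)
                (Defs.total (scale_at X i (c n)) w))%:E)%E @[n --> \oo] -->
  (\int[P]_w (loss_term (g k) u b (X k w) (Defs.total X w))%:E)%E.
Proof.
move=> c_gt0 c_cvg a_ge0 a_cvg.
have [M M_ge0 loss_le] := loss_term_bounded (g_cont k) (g_ge0 k) u_ge0.
have mX_total := measurable_total mX.
have mfn n : measurable_fun setT (fun w => (loss_term (g k) u (a n)
    (scale_at X i (c n) k w) (Defs.total (scale_at X i (c n)) w))%:E).
  exact: measurable_loss_term (measurable_scale_at _ _)
    (measurable_total (measurable_scale_at _)).
have mf : measurable_fun setT
    (fun w => (loss_term (g k) u b (X k w) (Defs.total X w))%:E).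
  exact: measurable_loss_term (mX k) mX_total.
have M_int : P.-integrable setT (EFin \o cst M).
  exact: finite_measure_integrable_cst.
have dominated : {ae P, forall w n, setT w -> (`|(loss_term (g k) u (a n)
    (scale_at X i (c n) k w) (Defs.total (scale_at X i (c n)) w))%:E|
    <= (EFin \o cst M) w)%E}.
  apply: aeW => w n _ /=; rewrite lee_fin ger0_norm ?(loss_term_ge0 (g_ge0 k)) //.
  exact: loss_le _ _ _ (a_ge0 n) (scale_at_le_total _ _ _ (ltW (c_gt0 n))).
have pointwise : {ae P, forall w, setT w -> (loss_term (g k) u (a n)
    (scale_at X i (c n) k w) (Defs.total (scale_at X i (c n)) w))%:E
    @[n --> \oo] --> (loss_term (g k) u b (X k w) (Defs.total X w))%:E}.
  have mXb : measurable [set w | X k w = b].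
    by have := mX k measurableT _ (measurable_set1 b); rewrite setTI.
  have mtotal : measurable [set w | Defs.total X w = u].
    by have := mX_total measurableT _ (measurable_set1 u); rewrite setTI.
  exists ([set w | X k w = b] `|` [set w | Defs.total X w = u]); split.
  - exact: measurableU.
  - exact: null_set_setU mXb mtotal (X_atomless k b) total_atomless.
  - move=> w /= w_bad; apply: contra_notP w_bad => /not_orP[Xb total_u] _.
    apply: cvg_EFin; first exact: nearW.
    apply: cvg_loss_term => //; [exact: scale_at_cvg|exact: total_scale_at_cvg| |].
      by apply/eqP => bX; apply: Xb.
    exact/eqP.
by have [_ _] :=
  dominated_convergence measurableT mfn mf pointwise M_int dominated.
Qed.

Lemma Icrit_scale_at_cvg (c : nat -> R) (v : nat -> 'I_d -> R) (vs : 'I_d -> R) :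
  (forall n, 0 < c n) -> c n @[n --> \oo] --> (1 : R) ->
  (forall n, allocs u (v n)) -> (forall k, v n k @[n --> \oo] --> vs k) ->
  Icrit P g u (scale_at X i (c n)) (v n) @[n --> \oo] --> Icrit P g u X vs.
Proof.
move=> c_gt0 c_cvg v_alloc v_cvg; apply: cvg_nnesum => k _.
  apply: nearW => n; apply: integral_ge0 => w _.
  by rewrite lee_fin (loss_term_ge0 (g_ge0 k)).
apply: integral_loss_term_cvg => // n.
by have [/(_ k) /andP[]] := v_alloc n.
Qed.

Lemma minimizer_limit (c : nat -> R) (v : nat -> 'I_d -> R) (vs : 'I_d -> R) :
  (forall n, 0 < c n) -> c n @[n --> \oo] --> (1 : R) ->
  (forall n, is_minimizer P g u (scale_at X i (c n)) (v n)) ->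
  (forall k, v n k @[n --> \oo] --> vs k) ->
  is_minimizer P g u X vs.
Proof.
move=> c_gt0 c_cvg v_min v_cvg.
have v_alloc n : allocs u (v n) := (v_min n).1.
split=> [|w w_alloc]; first exact: allocs_closed v_alloc v_cvg.
apply: lee_cvg_to (Icrit_scale_at_cvg _ _ _ c_gt0 c_cvg v_alloc v_cvg)
  (Icrit_scale_at_cvg _ _ _ c_gt0 c_cvg (fun=> w_alloc) (fun=> cvg_cst _)) _.
by apply: nearW => n; exact: (v_min n).2.
Qed.

Lemma alloc_subseq_cvg (c : nat -> R) :
  (forall n, 0 < c n) -> c n @[n --> \oo] --> (1 : R) ->
  (forall n, H1 P g u (scale_at X i (c n))) -> H1 P g u X ->
  exists2 phi : nat -> nat, increasing_seq phi & forall k,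
    alloc P g u (scale_at X i (c (phi n))) k @[n --> \oo] --> alloc P g u X k.
Proof.
move=> c_gt0 c_cvg H1c H1X.
pose v n := alloc P g u (scale_at X i (c n)).
have v_min n : is_minimizer P g u (scale_at X i (c n)) (v n).
  exact: alloc_is_minimizer.
have v_bnd n k : `|v n k| <= u.
  by have [[/(_ k) /andP[v_ge0 v_le_u] _] _] := v_min n; rewrite ger0_norm.
have [phi phi_incr phi_cvg] := bolzano_weierstrass_fun v_bnd.
pose vs k := lim (v (phi n) k @[n --> \oo]).
have vs_cvg k : v (phi n) k @[n --> \oo] --> vs k by exact: phi_cvg.
have vs_min := minimizer_limit (c \o phi) (fun n => v (phi n)) vs
  (fun n => c_gt0 (phi n)) (cvgn_subseq phi_incr c_cvg) (fun n => v_min (phi n))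
  vs_cvg.
by exists phi => // k; rewrite -(minimizer_alloc H1X vs_min); exact: vs_cvg.
Qed.

End criterion_perturbation.

Theorem mainTheorem7 (R : realType) (dT : measure_display) (T : measurableType dT)
  (P : probability T R) (d : nat) (u : R) (g dg : 'I_d -> R -> R)
  (X : 'I_d -> T -> R) :
  0 <= u ->
  (forall k, penalty (g k) (dg k)) ->
  (forall k, measurable_fun setT (X k)) ->
  (forall k w, 0 <= X k w) ->
  (* (X_1,...,X_d) is continuous: no component has an atom *)
  (forall k (x : R), P [set w | X k w = x] = 0%E) ->
  H1 P g u X -> H2 P dg u X ->
  (forall i, \forall e \near 0,
     H1 P g u (scale_at X i (1 + e)) /\ H2 P dg u (scale_at X i (1 + e))) ->
  (forall k, exists2 e0 : R, 0 < e0 & forall e : R, `|e| < e0 ->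
     (\int[P]_w sup_absder (dg k) u ((1 + e) * X k w) < +oo)%E) ->
  forall i k,
    alloc P g u (scale_at X i (1 + e)) k @[e --> 0^'] --> alloc P g u X k.
Proof.
move=> u_ge0 g_pen mX X_ge0 X_atomless H1X H2X H12_near _ i k.
have g_cont l : {within `]-oo, 0], continuous (g l)} by have [] := g_pen l.
have g_ge0 l x : x <= 0 -> 0 <= g l x.
  by have [_ [_ [_ [_ [g_ge0 _]]]]] := g_pen l; exact: g_ge0.
have total_atomless := has_joint_density_snd_atomless _ _ u (H2X.2 i).
have H1_pos : \forall e \near 0, H1 P g u (scale_at X i (1 + e)) /\ 0 < 1 + e.
  near=> e; split.
    by near: e; apply: filterS (H12_near i) => ? [].
  rewrite -ltrBlDl sub0r; near: e.
  by apply: (cvgr_gt 0 cvg_id); rewrite ltrN10.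
apply/cvgr_dnbhsP => e [_ e_cvg]; apply: cvgn_subsubseq => f f_incr.
have [N _ H1_pos_ef] := cvgn_subseq f_incr e_cvg _ H1_pos.
(* shifting by [N] keeps the whole subsequence inside [H1_pos] *)
pose c n := 1 + e (f (n + N)%N).
have c_cvg : c n @[n --> \oo] --> (1 : R).
  rewrite -[X in _ --> X]addr0; apply: cvgD (cvg_cst _) _.
  by rewrite (cvg_shiftn N (e \o f)); exact: cvgn_subseq f_incr e_cvg.
have [phi phi_incr alloc_cvg] := alloc_subseq_cvg u_ge0 g_cont g_ge0 mX X_ge0
  X_atomless total_atomless c (fun n => (H1_pos_ef _ (leq_addl _ _)).2) c_cvg
  (fun n => (H1_pos_ef _ (leq_addl _ _)).1) H1X.
exists (fun n => phi n + N)%N; last exact: alloc_cvg.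
apply/increasing_seqP => n; rewrite ltEnat /= ltn_add2r.
by move/increasing_seqP: phi_incr; exact.
Unshelve. all: by end_near.
Qed.
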